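(* Let $\mathrm{Cl}_{p,q}$ be a non-degenerate real Clifford algebra with generators $e_1,\dots,e_n$, $n=p+q$, and let $\pi$ be the canonical matrix map defined below (extended linearly to $\mathrm{Cl}_{p,q}$). Let $e_s$ and $e_t$ be generators of $\mathrm{Cl}_{p,q}$. Then: (1) $\pi$ distributes over the Clifford product: $\pi(e_se_t)=\pi(e_s)\,\pi(e_t)$; (2) the set of all matrices $\mathbf{E}_S=\pi(e_S)$, $e_S\in\mathbf{B}$, forms a multiplicative semigroup.
   Context: Generators satisfy $e_ie_j=-e_je_i$ ($i\ne j$) and $e_i^2=\sigma_i\in\{1,-1\}$. For a multi-index $S=(s_1<\dots<s_m)\subseteq\{1,\dots,n\}$ let $e_S=e_{s_1}\cdots e_{s_m}$, $e_\emptyset=1$. The extended basis $\mathbf{B}$ is the list of all $2^n$ blades $e_S$ ordered by a fixed total order $\prec$ (extending $e_i\prec e_j$ for $i<j$, with $e_\emptyset=1$ first); each blade is indexed by its ordinal in this list. For blades $e_M,e_N$ one has $e_Me_N=m_{MN}\,e_{M\triangle N}$ with $m_{MN}\in\{1,-1\}$ ($\triangle$ = symmetric difference). The multiplication table is the $2^n\times 2^n$ array $\mathbf{M}=(e_Me_N)_{M,N}$. For a blade $e_S$, the coefficient map $C_S$ acts entrywise, sending an entry $x\,e_U$ to $x$ if $U=S$ and to $0$ otherwise; $\mathbf{A}_S:=C_S(\mathbf{M})$, i.e. $(\mathbf{A}_S)_{MN}=m_{MN}$ if $M\triangle N=S$ and $0$ otherwise. $\mathbf{G}$ is the diagonal $2^n\times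 2^n$ real matrix with diagonal entries $\sigma_M=e_M\ast e_M=\langle e_Me_M\rangle_0\in\{1,-1\}$. The canonical matrix map is $\pi(e_S)=\mathbf{E}_S:=\mathbf{G}\mathbf{A}_S$ (real $2^n\times 2^n$ matrix), extended linearly to all of $\mathrm{Cl}_{p,q}$. *)

From HB Require Import structures.
From mathcomp Require Import all_boot all_order all_algebra.
From mathcomp Require Import reals.
Set Implicit Arguments. Unset Strict Implicit. Unset Printing Implicit Defensive.
Import Order.TTheory GRing.Theory Num.Theory.
Local Open Scope ring_scope.

Section Clifford.
Variables (R : realType) (p q : nat).
Local Notation n := (p + q)%N.

(* Multi-indices are finite subsets of the generator indices 'I_n
   (generator e_{i+1} of the paper corresponds to i : 'I_n). *)
Definition symd (M N : {set 'I_n}) : {set 'I_n} := (M :\: N) :|: (N :\: M).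

(* e_i^2 = sigma_i : the first p generators square to 1, the last q to -1. *)
Definition sigma (i : 'I_n) : R := if (i < p)%N then 1 else -1.

(* The sign m_{MN} with e_M e_N = m_{MN} e_{M \triangle N}: one factor -1 for
   each anticommutation needed (pairs i in M, j in N, j < i), and a factor
   sigma_i for each repeated generator i in M :&: N. *)
Definition msign (M N : {set 'I_n}) : R :=
  (-1) ^+ #|[set ij : 'I_n * 'I_n | [&& ij.1 \in M, ij.2 \in N & (ij.2 < ij.1)%N]]|
  * \prod_(i in M :&: N) sigma i.

(* Elements of Cl_{p,q}: real coefficient vectors on the blade basis. *)
Definition Cl := {ffun {set 'I_n} -> R}.

Definition blade (S : {set 'I_n}) : Cl := [ffun U => (U == S)%:R].
Definition gen (i : 'I_n) : Cl := blade [set i].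

Definition cl_mul (x y : Cl) : Cl :=
  [ffun U => \sum_(M : {set 'I_n}) \sum_(N : {set 'I_n})
               (if symd M N == U then x M * y N * msign M N else 0)].

(* Matrices are indexed by ordinals of 'I_(2^n); b k is the k-th blade of
   the extended basis in the order \prec. *)
Variable b : 'I_(2 ^ n) -> {set 'I_n}.

Definition Amx (S : {set 'I_n}) : 'M[R]_(2 ^ n) :=
  \matrix_(i, j) (if symd (b i) (b j) == S then msign (b i) (b j) else 0).

(* G = diag(sigma_M), sigma_M = <e_M e_M>_0 = m_{MM}. *)
Definition Gmx : 'M[R]_(2 ^ n) :=
  \matrix_(i, j) (if i == j then msign (b i) (b i) else 0).

Definition Emx (S : {set 'I_n}) : 'M[R]_(2 ^ n) := Gmx *m Amx S.

Definition matmap (x : Cl) : 'M[R]_(2 ^ n) := \sum_(S : {set 'I_n}) x S *: Emx S.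

End Clifford.

From HB Require Import structures.
From mathcomp Require Import all_boot all_order all_algebra reals.
From mathcomp Require Import ring.
Import Order.TTheory GRing.Theory Num.Theory.
Set Implicit Arguments. Unset Strict Implicit. Unset Printing Implicit Defensive.
Local Open Scope ring_scope.

(* The sign [msign M N] is a +-1-valued bicharacter for the symmetric
   difference of multi-indices.  In [(G A_S G A_T)_(ik)] only the index [j]
   with [b j = b i △ S] contributes, and the bicharacter law turns the three
   signs met on the way into [m_ST m_(b i, b k)], so [E_S E_T = m_ST E_(S △ T)].
   By bilinearity the matrix map is then multiplicative on all of [Cl_(p,q)],
   and the matrices [± E_S] are closed under products. *)

Section InvolutiveProducts.
Variables (R : comPzRingType) (T : finType) (f : T -> R).
Hypothesis f_invol : forall i, f i * f i = 1.

Lemma prod_symdiff (A B : {set T}) :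
  \prod_(i in (A :\: B) :|: (B :\: A)) f i = \prod_(i in A) f i * \prod_(i in B) f i.
Proof.
rewrite (eq_bigl [predU A :\: B & B :\: A]); last by move=> x; rewrite !inE.
rewrite bigU /=; last first.
  by rewrite -setI_eq0; apply/eqP/setP=> x; rewrite !inE; case: (x \in A); case: (x \in B).
rewrite [X in _ = X * _](big_setID B) [X in _ = _ * X](big_setID A) /= [B :&: A]setIC.
by rewrite mulrCA !mulrA -big_split /= [X in X * _ * _]big1 ?mul1r.
Qed.

Lemma prod_involutive_sq (A : {set T}) : (\prod_(i in A) f i) ^+ 2 = 1.
Proof. by rewrite expr2 -big_split /= big1. Qed.

End InvolutiveProducts.

Lemma sqr_eq1P (R : idomainType) (c : R) : c ^+ 2 = 1 <-> c = 1 \/ c = -1.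
Proof.
split=> [/eqP|[] ->]; last by rewrite sqrrN expr1n.
- by rewrite sqrf_eq1 => /orP[] /eqP; [left|right].
- by rewrite expr1n.
Qed.

Section Signs.
Variables (R : realType) (p q : nat).
Local Notation n := (p + q)%N.
Local Notation msign := (msign R).
Implicit Types M N K T : {set 'I_n}.

Lemma symdK M N : symd M (symd M N) = N.
Proof. by apply/setP=> x; rewrite !inE; case: (x \in M); case: (x \in N). Qed.

Lemma eq_symd_shift M N K T : (symd N K == T) = (symd M K == symd (symd M N) T).
Proof.
apply/eqP/eqP => /setP h; apply/setP => x; move: (h x); rewrite !inE;
  by case: (x \in M); case: (x \in N); case: (x \in K); case: (x \in T).
Qed.

Definition inversions M N : {set 'I_n * 'I_n} :=
  [set ij : 'I_n * 'I_n | [&& ij.1 \in M, ij.2 \in N & (ij.2 < ij.1)%N]].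

Lemma msignE M N :
  msign M N = \prod_(ij in inversions M N) (-1 : R) * \prod_(i in M :&: N) sigma R i.
Proof. by rewrite /msign prodr_const. Qed.

Lemma sigma_invol (i : 'I_n) : sigma R i * sigma R i = 1.
Proof. by rewrite /sigma; case: ifP => _; rewrite ?mulrNN mulr1. Qed.

Lemma neg1_invol : (-1 : R) * (-1) = 1.
Proof. by rewrite mulrNN mulr1. Qed.

Lemma msign_symdl M N K : msign (symd M N) K = msign M K * msign N K.
Proof.
rewrite !msignE.
have -> : inversions (symd M N) K =
    (inversions M K :\: inversions N K) :|: (inversions N K :\: inversions M K).
  apply/setP=> x; rewrite !inE.
  by case: (x.1 \in M); case: (x.1 \in N); case: (x.2 \in K); case: (x.2 < x.1)%N.
have -> : symd M N :&: K = ((M :&: K) :\: (N :&: K)) :|: ((N :&: K) :\: (M :&: K)).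
  by apply/setP=> x; rewrite !inE; case: (x \in M); case: (x \in N); case: (x \in K).
rewrite (prod_symdiff (fun=> neg1_invol)) (prod_symdiff sigma_invol).
by rewrite mulrACA.
Qed.

Lemma msign_symdr M N K : msign K (symd M N) = msign K M * msign K N.
Proof.
rewrite !msignE.
have -> : inversions K (symd M N) =
    (inversions K M :\: inversions K N) :|: (inversions K N :\: inversions K M).
  apply/setP=> x; rewrite !inE.
  by case: (x.2 \in M); case: (x.2 \in N); case: (x.1 \in K); case: (x.2 < x.1)%N.
have -> : K :&: symd M N = ((K :&: M) :\: (K :&: N)) :|: ((K :&: N) :\: (K :&: M)).
  by apply/setP=> x; rewrite !inE; case: (x \in M); case: (x \in N); case: (x \in K).
rewrite (prod_symdiff (fun=> neg1_invol)) (prod_symdiff sigma_invol).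
by rewrite mulrACA.
Qed.

Lemma msign_sq M N : msign M N ^+ 2 = 1.
Proof.
rewrite msignE exprMn (prod_involutive_sq (fun=> neg1_invol)).
by rewrite (prod_involutive_sq sigma_invol) mulr1.
Qed.

Lemma msign_symd_symd M N K :
  msign (symd M N) (symd N K) * msign M K = msign M N * (msign N N * msign N K).
Proof.
rewrite msign_symdl !msign_symdr -[RHS]mulr1 -(msign_sq M K) expr2; ring.
Qed.

End Signs.

Section MatrixMap.
Variables (R : realType) (p q : nat).
Local Notation n := (p + q)%N.
Local Notation msign := (msign R).
Variable b : 'I_(2 ^ n) -> {set 'I_n}.
Hypothesis b_bij : bijective b.
Local Notation Emx := (Emx R b).
Local Notation matmap := (matmap b).
Implicit Types S T : {set 'I_n}.

Lemma EmxE S i j : Emx S i j =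
  msign (b i) (b i) * (if symd (b i) (b j) == S then msign (b i) (b j) else 0).
Proof.
rewrite mxE (bigD1 i) //= big1 => [|k /negbTE nk]; last by rewrite !mxE eq_sym nk mul0r.
by rewrite !mxE eqxx addr0.
Qed.

Lemma Emx_mul S T : Emx S *m Emx T = msign S T *: Emx (symd S T).
Proof.
have [b' bK b'K] := b_bij.
apply/matrixP => i k; rewrite mxE [RHS]mxE EmxE.
pose j := b' (symd (b i) S).
have bj : b j = symd (b i) S by rewrite b'K.
rewrite (bigD1 j) //= big1 => [|l nl]; last first.
  rewrite EmxE; case: eqP => [bil|]; last by rewrite mulr0 mul0r.
  by case/eqP: nl; apply: (can_inj bK); rewrite bj -bil symdK.
rewrite addr0 !EmxE bj symdK eqxx.
move: (symd (b i) S) (symdK (b i) S) => N <-.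
rewrite -eq_symd_shift; case: eqP => [<-|_]; last by rewrite !mulr0.
by rewrite [RHS]mulrCA msign_symd_symd !mulrA.
Qed.

Lemma matmap_mul (x y : Cl R p q) : matmap (cl_mul x y) = matmap x *m matmap y.
Proof.
rewrite /matmap mulmx_suml.
under eq_bigr do rewrite ffunE scaler_suml.
rewrite exchange_big; apply: eq_bigr => M _; rewrite mulmx_sumr.
under eq_bigr do rewrite scaler_suml.
rewrite exchange_big; apply: eq_bigr => N _.
rewrite (bigD1 (symd M N)) //= eqxx big1 => [|U]; last first.
  by rewrite eq_sym => /negbTE ->; rewrite scale0r.
by rewrite addr0 -scalemxAl -scalemxAr Emx_mul !scalerA mulrAC.
Qed.

Lemma signed_Emx_mul S T (c d : R) : c ^+ 2 = 1 -> d ^+ 2 = 1 ->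
  (c *: Emx S) *m (d *: Emx T) = (c * d * msign S T) *: Emx (symd S T)
  /\ (c * d * msign S T) ^+ 2 = 1.
Proof.
move=> c2 d2; split; first by rewrite -scalemxAl -scalemxAr Emx_mul !scalerA mulrA.
by rewrite exprMn msign_sq exprMn c2 d2 !mulr1.
Qed.

End MatrixMap.

Theorem theorem1 (R : realType) (p q : nat)
  (b : 'I_(2 ^ (p + q)) -> {set 'I_(p + q)})
  (b_bij : bijective b)
  (b_one_first : forall k, b k = set0 -> nat_of_ord k = 0%N)
  (b_gen_order : forall (i j : 'I_(p + q)) (k l : 'I_(2 ^ (p + q))),
      (i < j)%N -> b k = [set i] -> b l = [set j] -> (k < l)%N) :
  (forall s t : 'I_(p + q),
     matmap b (cl_mul (gen R s) (gen R t)) = matmap b (gen R s) *m matmap b (gen R t))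
  /\
  (forall X Y : 'M[R]_(2 ^ (p + q)),
     (exists (c : R) (S : {set 'I_(p + q)}), (c = 1 \/ c = -1) /\ X = c *: Emx R b S) ->
     (exists (c : R) (S : {set 'I_(p + q)}), (c = 1 \/ c = -1) /\ Y = c *: Emx R b S) ->
     (exists (c : R) (S : {set 'I_(p + q)}), (c = 1 \/ c = -1) /\ X *m Y = c *: Emx R b S)).
Proof.
split=> [s t|X Y]; first exact: matmap_mul.
move=> [c [S [/sqr_eq1P c2 ->]]] [d [T [/sqr_eq1P d2 ->]]].
have [XY cd2] := signed_Emx_mul b_bij S T c2 d2.
by exists (c * d * msign R S T), (symd S T); split; [exact/sqr_eq1P | exact: XY].
Qed.
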